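(* Let $n,k,t$ be positive integers with $t\leq\frac{\log n}{2k}$, let $p\geq\frac{\log^3 n}{n}$, and fix $u\in\{1,\dots,n\}$. Let $\mathcal W$ be the set of walks $w=(w(0),w(1),\dots,w(k))$ of length $k$ in the complete graph (with self-loops) on $\{1,\dots,n\}$ with $w(0)=u$. For $\vec w=(w_1,\dots,w_{2t})\in\mathcal W^{2t}$, call $\vec w$ valid if every edge (unordered pair $\{a,b\}$, possibly $a=b$) traversed by the walks is traversed at least twice in total, counting multiplicity over all steps of all $2t$ walks, and let $|\vec w|$ be the number of distinct edges traversed. Let $\mathcal W^{2t}_{pair}$ be the set of valid $\vec w$. Then for every $\ell$, $$\big|\{\vec w\in\mathcal W^{2t}_{pair}:\ |\vec w|=\ell\}\big|\leq\binom{2tk}{2\ell}(2\ell-1)!!\cdot\ell^{2kt-2\ell}\,n^\ell.$$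
   Context: $(2\ell-1)!!=(2\ell-1)(2\ell-3)\cdots 1$. *)

From Stdlib Require Import Reals.
From mathcomp Require Import all_boot.
Set Implicit Arguments. Unset Strict Implicit. Unset Printing Implicit Defensive.

Fixpoint dfact (m : nat) : nat :=
  match m with
  | 0 => 1
  | 1 => 1
  | S (S m' as m1) => m * dfact m'
  end.

Definition walk (n k : nat) := {ffun 'I_k.+1 -> 'I_n}.

Definition walks (n k m : nat) := {ffun 'I_m -> walk n k}.

(* the (unordered, possibly loop) edge traversed by step j of walk w:
   {w(j), w(j+1)} *)
Definition step_edge (n k : nat) (w : walk n k) (j : 'I_k) : {set 'I_n} :=
  [set w (widen_ord (leqnSn k) j); w (lift ord0 j)].

Definition edges_of (n k m : nat) (W : walks n k m) : {set {set 'I_n}} :=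
  [set step_edge (W ij.1) ij.2 | ij : 'I_m * 'I_k].

Definition edge_mult (n k m : nat) (W : walks n k m) (e : {set 'I_n}) : nat :=
  #|[set ij : 'I_m * 'I_k | step_edge (W ij.1) ij.2 == e]|.

Definition valid (n k m : nat) (W : walks n k m) : bool :=
  [forall e in edges_of W, 2 <= edge_mult W e].

Definition starts_at (n k m : nat) (u : 'I_n) (W : walks n k m) : bool :=
  [forall i, W i ord0 == u].

Definition pair_walks_l (n k t : nat) (u : 'I_n) (l : nat) : {set walks n k (2 * t)} :=
  [set W : walks n k (2 * t) | [&& starts_at u W, valid W & #|edges_of W| == l]].

From Stdlib Require Import Reals.
From mathcomp Require Import all_boot zify ring.
Set Implicit Arguments. Unset Strict Implicit. Unset Printing Implicit Defensive.

(* Concatenate the 2t walks into one sequence of 2tk chosen vertices; given the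
   vertices chosen before it, a step is determined by the edge it traverses.
   Scan the sequence, keeping a = the number of edges traversed exactly once so
   far and c = the number of distinct edges still to appear.  A step either opens
   a new edge (at most n choices; a increases, c decreases), closes an edge seen
   once (at most a choices; a decreases), or repeats an edge seen at least twice
   (at most l choices).  With r steps left, the number of ways to end with every
   edge traversed twice is thus at most
     C(r, a + 2c) l^(r - a - 2c) (a + 2c)! / (2^c c!) n^c,
   which satisfies exactly this recursion in r, and equals the claimed bound for
   a = 0, c = l and r = 2tk. *)

Lemma dfact_oddS c : dfact (2 * c.+1 - 1) = (2 * c).+1 * dfact (2 * c - 1).
Proof.
case: c => [|c] //.
by rewrite (_ : 2 * c.+2 - 1 = (2 * c.+1 - 1).+2) /=; [congr (_ * _); lia | lia].
Qed.

Lemma dfact_odd_fact c : dfact (2 * c - 1) * (2 ^ c * c`!) = (2 * c)`!.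
Proof.
elim: c => [|c IH] //.
rewrite dfact_oddS expnS factS (_ : 2 * c.+1 = (2 * c).+2) ?factS -?IH; first ring.
lia.
Qed.

(* The number of ways to schedule [a + 2 c] steps closing [a] open edges and
   opening and closing [c] new ones. *)
Definition completions (a c : nat) : nat := 'C(a + 2 * c, a) * a`! * dfact (2 * c - 1).

Lemma completions_fact a c : completions a c * (2 ^ c * c`!) = (a + 2 * c)`!.
Proof.
rewrite /completions -mulnA dfact_odd_fact -mulnA -(bin_fact (leq_addr (2 * c) a)).
by rewrite addKn.
Qed.

Lemma completionsS a c : 0 < a + 2 * c ->
  completions a c = (if c is c'.+1 then completions a.+1 c' else 0) + a * completions a.-1 c.
Proof.
move=> pos; apply/eqP; rewrite -(eqn_pmul2r (_ : 0 < 2 ^ c * c`!)); last first.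
  by rewrite muln_gt0 expn_gt0 fact_gt0.
rewrite mulnDl completions_fact.
have -> : a * completions a.-1 c * (2 ^ c * c`!) = a * (a + 2 * c).-1`!.
  case: a {pos} => [|a]; first by rewrite !mul0n.
  by rewrite -mulnA completions_fact; congr (_ * _`!); lia.
have -> : (if c is c'.+1 then completions a.+1 c' else 0) * (2 ^ c * c`!)
          = 2 * c * (a + 2 * c).-1`!.
  case: c {pos} => [|c]; first by rewrite !muln0 mul0n.
  rewrite expnS factS (_ : (a + 2 * c.+1).-1 = a.+1 + 2 * c); last by lia.
  by rewrite -completions_fact; ring.
by rewrite -mulnDl -(prednK pos) factS prednK // addnC.
Qed.

Definition placements (l r x : nat) : nat := 'C(r, x) * l ^ (r - x).

Lemma placementsS l r x :
  placements l r.+1 x = (if x is x'.+1 then placements l r x' else 0) + l * placements l r x.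
Proof.
rewrite /placements; case: x => [|x]; first by rewrite !bin0 !subn0 expnS add0n !mul1n.
rewrite binS subSS mulnDl addnC; congr (_ + _).
have [lt_xr | le_rx] := ltnP x r; last by rewrite bin_small ?ltnS // !mul0n muln0.
by rewrite -[r - x](subnSK lt_xr) expnS; ring.
Qed.

Definition trace_bound (N l r a c : nat) : nat :=
  placements l r (a + 2 * c) * completions a c * N ^ c.

Lemma trace_boundS N l r a c :
  trace_bound N l r.+1 a c = a * trace_bound N l r a.-1 c + l * trace_bound N l r a c
                             + N * (if c is c'.+1 then trace_bound N l r a.+1 c' else 0).
Proof.
rewrite /trace_bound placementsS.
have [x0 | pos] := posnP (a + 2 * c).
  have [-> ->] : a = 0 /\ c = 0 by lia.
  rewrite !muln0 add0n; ring.
rewrite (completionsS pos) -(prednK pos).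
have -> : a * (placements l r (a.-1 + 2 * c) * completions a.-1 c * N ^ c)
          = placements l r (a + 2 * c).-1 * (a * completions a.-1 c) * N ^ c.
  by case: a pos => [|a] _; rewrite ?mul0n ?muln0 //= (_ : a + 2 * c = (a.+1 + 2 * c).-1) //; ring.
have -> : N * (if c is c'.+1 then
                 placements l r (a.+1 + 2 * c') * completions a.+1 c' * N ^ c' else 0)
          = placements l r (a + 2 * c).-1 * (if c is c'.+1 then completions a.+1 c' else 0) * N ^ c.
  case: c pos => [|c] _; rewrite ?muln0 ?mul0n //.
  by rewrite (_ : (a + 2 * c.+1).-1 = a.+1 + 2 * c) ?expnS; [ring | lia].
ring.
Qed.

Fixpoint seqs_of_size (T : finType) (r : nat) : seq (seq T) :=
  if r is r'.+1 then flatten [seq [seq x :: s | s <- seqs_of_size T r'] | x <- enum T]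
  else [:: [::]].

Lemma mem_seqs_of_size (T : finType) r s : (s \in seqs_of_size T r) = (size s == r).
Proof.
elim: r s => [|r IH] [|x s] //=.
- by apply/negbTE/flatten_mapP => -[y _ /mapP [? _ //]].
- rewrite eqSS -IH; apply/flatten_mapP/idP => [[y _ /mapP [s' s'r [_ ->]]] // | sr].
  by exists x; rewrite ?mem_enum //; apply/mapP; exists s.
Qed.

Lemma count_seqs_of_sizeS (T : finType) (P : pred (seq T)) r :
  count P (seqs_of_size T r.+1) = \sum_(x : T) count (fun s => P (x :: s)) (seqs_of_size T r).
Proof.
rewrite /= count_flatten -map_comp sumnE big_map big_enum /=.
by apply: eq_bigr => x _; rewrite count_map.
Qed.

Lemma leq_card_count (T : finType) (U : eqType) (A : {pred T}) (f : T -> U) (P : pred U)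
    (s : seq U) :
  {in A &, injective f} -> (forall x, x \in A -> (f x \in s) && P (f x)) -> #|A| <= count P s.
Proof.
move=> f_inj fA; rewrite cardE -(size_map f) -size_filter.
apply: uniq_leq_size => [|_ /mapP [x xA ->]]; last by rewrite mem_filter andbC fA // -mem_enum.
by rewrite map_inj_in_uniq ?enum_uniq // => x y; rewrite !mem_enum; apply: f_inj.
Qed.

Lemma leq_sum_preim (T T' : finType) (g : T -> T') (B : {set T'}) X :
  injective g -> \sum_(x : T) (g x \in B) * X <= #|B| * X.
Proof.
move=> g_inj; rewrite -big_distrl leq_mul2r; apply/orP; right.
have -> : \sum_(x : T) (g x \in B : nat) = #|[preim g of B]|.
  by rewrite -sum1_card [RHS]big_mkcond.
by rewrite card_preim //; apply/subset_leq_card/subsetP => y /andP [].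
Qed.

Lemma count_mem_rcons (T : eqType) (h : seq T) x y :
  count_mem y (rcons h x) = count_mem y h + (x == y).
Proof. by rewrite -cats1 count_cat /= addn0. Qed.

Section EdgeMultisets.

Variable T : finType.
Implicit Types (h : seq T) (x : T).

Definition singles h : {set T} := [set x | count_mem x h == 1].

Definition paired (l : nat) h : bool := (singles h == set0) && (#|[set x in h]| == l).

Lemma card_singles_rcons_new h x : x \notin h -> #|singles (rcons h x)| = #|singles h|.+1.
Proof.
move=> xh; have -> : singles (rcons h x) = x |: singles h.
  apply/setP => y; rewrite !inE count_mem_rcons.
  by case: (eqVneq x y) => [<-|]; rewrite ?(count_memPn xh) ?addn0.
by rewrite cardsU1 inE (count_memPn xh).
Qed.

Lemma card_singles_rcons_once h x :
  count_mem x h = 1 -> #|singles (rcons h x)| = #|singles h|.-1.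
Proof.
move=> x1; have -> : singles (rcons h x) = singles h :\ x.
  apply/setP => y; rewrite !inE count_mem_rcons.
  by case: (eqVneq x y) => [<-|]; rewrite ?x1 ?addn0.
by rewrite (cardsD1 x (singles h)) inE x1.
Qed.

Lemma singles_rcons_repeat h x :
  x \in h -> count_mem x h != 1 -> singles (rcons h x) = singles h.
Proof.
rewrite -has_pred1 has_count => x_gt0 x_ne1; apply/setP => y; rewrite !inE count_mem_rcons.
case: (eqVneq x y) => [<-|]; last by rewrite addn0.
by move: x_gt0 x_ne1; case: (count_mem x h) => [|[|]].
Qed.

Lemma card_set_rcons h x : #|[set y in rcons h x]| = (x \notin h) + #|[set y in h]|.
Proof.
have -> : [set y in rcons h x] = x |: [set y in h].
  by apply/setP => y; rewrite !inE mem_rcons inE.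
by rewrite cardsU1 inE.
Qed.

Lemma paired_cat_gt l h h' : l < #|[set x in h]| -> paired l (h ++ h') = false.
Proof.
move=> lt_lh; apply/negbTE; rewrite negb_and; apply/orP; right.
suff : #|[set x in h]| <= #|[set x in h ++ h']| by rewrite neq_ltn; lia.
by apply/subset_leq_card/subsetP => y; rewrite !inE mem_cat => ->.
Qed.

End EdgeMultisets.

Section Traces.

Variables (V E : finType) (edge : seq V -> V -> E).

Fixpoint trace (pre xs : seq V) : seq E :=
  if xs is x :: xs' then edge pre x :: trace (rcons pre x) xs' else [::].

Lemma trace_cat pre xs ys : trace pre (xs ++ ys) = trace pre xs ++ trace (pre ++ xs) ys.
Proof.
elim: xs pre => [|x xs IH] pre /=; first by rewrite cats0.
by rewrite IH cat_rcons.
Qed.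

Hypothesis edge_inj : forall pre, injective (edge pre).

Lemma count_paired_trace l r pre (h : seq E) c : #|[set e in h]| + c = l ->
  count (fun xs => paired l (h ++ trace pre xs)) (seqs_of_size V r)
    <= trace_bound #|V| l r #|singles h| c.
Proof.
elim: r pre h c => [|r IH] pre h c dist_h.
  rewrite /= cats0 addn0; case/boolP: (paired l h) => // /andP [/eqP -> /eqP dist_l].
  by rewrite cards0 (_ : c = 0) //; lia.
rewrite count_seqs_of_sizeS.
set a := #|singles h|; set B := trace_bound #|V| l r.
have step x : count (fun s => paired l (h ++ trace pre (x :: s))) (seqs_of_size V r)
    <= (edge pre x \in singles h) * B a.-1 c + (edge pre x \in [set e in h]) * B a c
       + (if c is c'.+1 then B a.+1 c' else 0).
  rewrite (eq_count (a2 := fun s => paired l (rcons h (edge pre x) ++ trace (rcons pre x) s)));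
    last by move=> s; rewrite /= cat_rcons.
  have dist_hx := card_set_rcons h (edge pre x).
  case: (boolP (edge pre x \in h)) => [old | new] in dist_hx *.
    have {}dist_hx : #|[set e in rcons h (edge pre x)]| + c = l by rewrite dist_hx.
    case: (eqVneq (count_mem (edge pre x) h) 1) => [once | repeat].
      rewrite !inE once old eqxx !mul1n -addnA.
      by apply: leq_trans (leq_addr _ _); rewrite /a -(card_singles_rcons_once once); apply: IH.
    rewrite !inE old (negbTE repeat) mul0n mul1n add0n.
    by apply: leq_trans (leq_addr _ _); rewrite /a -(singles_rcons_repeat old repeat); apply: IH.
  rewrite !inE (count_memPn new) (negbTE new) !mul0n !add0n.
  case: c dist_h => [|c] dist_h.
    by rewrite leqn0 -(count_pred0 (seqs_of_size V r)); apply/eqP/eq_count => s;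
      rewrite paired_cat_gt //; lia.
  by rewrite /a -(card_singles_rcons_new new); apply: IH; lia.
apply: leq_trans (leq_sum _ (fun x _ => step x)) _.
rewrite trace_boundS !big_split /= sum_nat_const leq_add2r.
apply: leq_add; first exact: leq_sum_preim (@edge_inj pre).
apply: leq_trans (leq_sum_preim _ _ (@edge_inj pre)) _.
by rewrite leq_mul2r -dist_h leq_addr orbT.
Qed.

End Traces.

Lemma set2_inj (T : finType) (a : T) : injective (fun x => [set a; x]).
Proof.
move=> x y /= axy.
have : x \in [set a; y] by rewrite -axy !inE eqxx orbT.
have : y \in [set a; x] by rewrite axy !inE eqxx orbT.
by rewrite !inE => /orP [/eqP -> | /eqP //] /orP [/eqP -> | /eqP].
Qed.

Lemma pairmap_map_iota (T R : Type) (f : T -> T -> R) (g : nat -> T) s r :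
  pairmap f (g s) [seq g i.+1 | i <- iota s r] = [seq f (g i) (g i.+1) | i <- iota s r].
Proof. by elim: r s => [|r IH] s //=; rewrite IH. Qed.

Section Walks.

Variables (n k m : nat) (u : 'I_n).

(* [pre] lists the vertices chosen so far; a new walk starts from [u] every [k] steps. *)
Definition walk_prev (pre : seq 'I_n) : 'I_n := if k %| size pre then u else last u pre.

Definition walk_edge (pre : seq 'I_n) (x : 'I_n) : {set 'I_n} := [set walk_prev pre; x].

Lemma walk_edge_inj pre : injective (walk_edge pre).
Proof. exact: set2_inj. Qed.

Definition walk_tail (w : walk n k) : seq 'I_n := [seq w (lift ord0 j) | j <- enum 'I_k].

Definition walks_tail (W : walks n k m) : seq 'I_n :=
  flatten [seq walk_tail (W i) | i <- enum 'I_m].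

Definition walks_edge_seq (W : walks n k m) : seq {set 'I_n} :=
  flatten [seq [seq step_edge (W i) j | j <- enum 'I_k] | i <- enum 'I_m].

Lemma size_walk_tail (w : walk n k) : size (walk_tail w) = k.
Proof. by rewrite size_map size_enum_ord. Qed.

Lemma shape_walks_tail (W : walks n k m) :
  shape [seq walk_tail (W i) | i <- enum 'I_m] = nseq m k.
Proof.
have /all_pred1P -> : all (pred1 k) (shape [seq walk_tail (W i) | i <- enum 'I_m]).
  by apply/allP => _ /mapP [_ /mapP [i _ ->] ->]; rewrite /= size_walk_tail.
by rewrite /shape !size_map -enumT size_enum_ord.
Qed.

Lemma size_walks_tail (W : walks n k m) : size (walks_tail W) = m * k.
Proof. by rewrite size_flatten shape_walks_tail sumn_nseq mulnC. Qed.

Lemma trace_walk_edge pre b : size pre %% k + size b <= k ->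
  trace walk_edge pre b = pairmap (fun x y => [set x; y]) (walk_prev pre) b.
Proof.
elim: b pre => [//|x [//|y b] IH] pre /= fit.
have not_dvd : ~~ (k %| (size pre).+1).
  rewrite (divn_eq (size pre) k) -addnS dvdn_addr ?dvdn_mull // gtnNdvd //=; lia.
transitivity (walk_edge pre x :: trace walk_edge (rcons pre x) (y :: b)); first by [].
rewrite IH; last by rewrite size_rcons modnS (negbTE not_dvd) /=; lia.
by rewrite /walk_prev size_rcons (negbTE not_dvd) last_rcons.
Qed.

Lemma step_edges_pairmap (w : walk n k) :
  [seq step_edge w j | j <- enum 'I_k] = pairmap (fun x y => [set x; y]) (w ord0) (walk_tail w).
Proof.
pose g i := w (inord i).
have -> : w ord0 = g 0 by rewrite /g; congr (w _); apply: val_inj; rewrite /= inordK.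
have -> : walk_tail w = [seq g i.+1 | i <- iota 0 k].
  rewrite -val_enum_ord -map_comp; apply: eq_map => j /=; rewrite /g.
  by congr (w _); apply: val_inj; rewrite /= inordK // ltnS.
rewrite pairmap_map_iota -val_enum_ord -map_comp; apply: eq_map => j /=.
by rewrite /step_edge /g; congr [set w _; w _]; apply: val_inj; rewrite /= inordK // ltnS // ltnW.
Qed.

Lemma trace_walks_tail (W : walks n k m) :
  starts_at u W -> trace walk_edge [::] (walks_tail W) = walks_edge_seq W.
Proof.
move=> /forallP W_u; rewrite /walks_tail /walks_edge_seq.
have : k %| size ([::] : seq 'I_n) by [].
elim: (enum 'I_m) [::] => [//|i s IH] pre k_pre /=.
rewrite trace_cat trace_walk_edge; last by rewrite (eqP k_pre) size_walk_tail.
rewrite /walk_prev k_pre step_edges_pairmap (eqP (W_u i)) IH //.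
by rewrite size_cat size_walk_tail dvdn_add.
Qed.

Lemma walks_tail_inj (W W' : walks n k m) :
  starts_at u W -> starts_at u W' -> walks_tail W = walks_tail W' -> W = W'.
Proof.
move=> /forallP W_u /forallP W'_u eq_tails.
have /eq_in_map eq_walk_tails :
    [seq walk_tail (W i) | i <- enum 'I_m] = [seq walk_tail (W' i) | i <- enum 'I_m].
  by rewrite -[LHS]flattenK -[RHS]flattenK !shape_walks_tail; congr reshape.
apply/ffunP => i; apply/ffunP => x.
have /eq_in_map eq_steps := eq_walk_tails i (mem_enum _ i).
case: (unliftP ord0 x) => [j -> | ->]; first exact: eq_steps (mem_enum _ j).
by rewrite (eqP (W_u i)) (eqP (W'_u i)).
Qed.

Lemma walks_edge_seq_set (W : walks n k m) : [set e in walks_edge_seq W] = edges_of W.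
Proof.
apply/setP => e; rewrite inE; apply/flatten_mapP/imsetP => [[i _ /mapP [j _ ->]] | [[i j] _ ->]].
  by exists (i, j).
by exists i; rewrite ?mem_enum //; apply/mapP; exists j; rewrite ?mem_enum.
Qed.

Lemma count_walks_edge_seq (W : walks n k m) e :
  count_mem e (walks_edge_seq W) = edge_mult W e.
Proof.
rewrite /edge_mult -sum1dep_card count_flatten -map_comp sumnE big_map big_enum /=.
transitivity (\sum_(i < m) \sum_(j < k) (step_edge (W i) j == e : nat)).
  by apply: eq_bigr => i _; rewrite count_map -sum1_count big_mkcond big_enum.
by rewrite pair_bigA [RHS]big_mkcond.
Qed.

Lemma paired_walks_edge_seq (W : walks n k m) l :
  valid W -> #|edges_of W| = l -> paired l (walks_edge_seq W).
Proof.
move=> /forall_inP W_valid W_l; rewrite /paired walks_edge_seq_set W_l eqxx andbT.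
apply/eqP/setP => e; rewrite !inE; apply/negbTE/eqP => e_once.
have e_W : e \in edges_of W by rewrite -walks_edge_seq_set inE -has_pred1 has_count e_once.
by have := W_valid e e_W; rewrite -count_walks_edge_seq e_once.
Qed.

End Walks.

Theorem proposition10 (n k t : nat) (p : R) (u : 'I_n) (l : nat) :
  0 < n -> 0 < k -> 0 < t ->
  Rle (INR t) (Rdiv (ln (INR n)) (Rmult 2 (INR k))) ->
  Rle (Rdiv (pow (ln (INR n)) 3) (INR n)) p ->
  #|pair_walks_l k t u l| <=
    'C(2 * t * k, 2 * l) * dfact (2 * l - 1) * l ^ (2 * k * t - 2 * l) * n ^ l.
Proof.
(* The count holds without the bounds on [t] and [p]. *)
move=> _ _ _ _ _.
pose P xs := paired l ([::] ++ trace (walk_edge k u) [::] xs).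
have card_le : #|pair_walks_l k t u l| <= count P (seqs_of_size 'I_n (2 * t * k)).
  apply: (@leq_card_count _ _ _ (@walks_tail n k (2 * t))) => [W W' | W].
    by rewrite !inE => /and3P [W_u _ _] /and3P [W'_u _ _]; exact: walks_tail_inj W_u W'_u.
  rewrite inE => /and3P [W_u W_valid W_l].
  rewrite mem_seqs_of_size size_walks_tail eqxx /P /= (trace_walks_tail W_u).
  exact: paired_walks_edge_seq W_valid (eqP W_l).
apply: leq_trans card_le _.
have dist0 : #|[set e in ([::] : seq {set 'I_n})]| + l = l.
  by rewrite cardsE eq_card0.
apply: leq_trans (count_paired_trace (@walk_edge_inj n k u) _ _ dist0) _.
have -> : singles ([::] : seq {set 'I_n}) = set0 by apply/setP => e; rewrite !inE.
rewrite cards0 card_ord /trace_bound /placements /completions add0n bin0 fact0 (mulnAC 2 k t).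
apply: eq_leq; ring.
Qed.
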